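(* Let $0<\epsilon<1$, $r>0$ be constants, $p_2=\frac{1-\epsilon}{n}$, $p_3=\frac{r}{n\ln n}$, and $K_0=\max\{1,\tfrac{2(9+\epsilon)}{r}\}$. For every constant $c>0$ there is a constant $K_1(c)$ (depending also on $\epsilon,r$) such that for every vertex $v$ and every integer $T\le K_0\ln n$, the propagation process in $\mathbb{G}(n,p_2,p_3)$ started from $v$ satisfies $$\Pr\big[|\mathcal{Y}_T|+|\mathcal{D}_T|>K_1(c)\ln n\big]<n^{-c}$$ (for all sufficiently large $n$), where if the process has stopped before time $T$ the sets are frozen at their final values.
   Context: $\mathbb{G}(n,p_2,p_3)$ is the random hypergraph on a vertex set $V$ with $|V|=n$ in which each of the $\binom n2$ possible 2-element edges is present with probability $p_2$ and each of the $\binom n3$ possible 3-element hyperedges is present with probability $p_3$, all independently. Propagation process from a vertex $v$: one maintains a set $\mathcal{Y}_t$ of active vertices and a set $\mathcal{D}_t$ of inactive vertices, with $\mathcal{Y}_0=\{v\}$, $\mathcal{D}_0=\emptyset$; vertices in neither set are unexplored. At time $t=0,1,2,\dots$, while $\mathcal{Y}_t\neq\emptyset$, pick an active vertex $v_t\in\mathcal{Y}_t$ and let $U_t$ be the set of unexplored vertices $u$ such that $\{v_t,u\}$ is a 2-edge or $\{v_t,u,w\}$ is a 3-edge for some $w\in\mathcal{D}_t$; set $\mathcal{Y}_{t+1}=(\mathcal{Y}_t\cup U_t)\setminus\{v_t\}$ and $\mathcal{D}_{t+1}=\mathcal{D}_t\cup\{v_t\}$. The process stops at $T_v=\min\{t:\mathcal{Y}_t=\emptyset\}$,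 and the propagation component of $v$ is $C_v=\mathcal{D}_{T_v}$, so $|C_v|=T_v$. *)

From HB Require Import structures.
From mathcomp Require Import all_boot.
From Stdlib Require Import Reals.

Set Implicit Arguments. Unset Strict Implicit. Unset Printing Implicit Defensive.
Local Open Scope nat_scope.

Lemma Rplus_assoc' : associative Rplus.
Proof. by move=> x y z; rewrite Rplus_assoc. Qed.
Lemma Rmult_assoc' : associative Rmult.
Proof. by move=> x y z; rewrite Rmult_assoc. Qed.
HB.instance Definition _ := Monoid.isComLaw.Build R 0%R Rplus
  Rplus_assoc' Rplus_comm Rplus_0_l.
HB.instance Definition _ := Monoid.isComLaw.Build R 1%R Rmult
  Rmult_assoc' Rmult_comm Rmult_1_l.

(* A hypergraph on 'I_n: a set E2 of 2-edges and a set E3 of 3-edges. *)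
Definition hgraph (n : nat) : Type := ({set {set 'I_n}} * {set {set 'I_n}})%type.

Definition hg_weight (n : nat) (p2 p3 : R) (G : hgraph n) : R :=
  if [forall S : {set 'I_n}, (S \in G.1) ==> (#|S| == 2)%N] &&
     [forall S : {set 'I_n}, (S \in G.2) ==> (#|S| == 3)%N]
  then
    Rmult
      (\big[Rmult/1%R]_(S : {set 'I_n} | #|S| == 2)
          (if S \in G.1 then p2 else (1 - p2)%R))
      (\big[Rmult/1%R]_(S : {set 'I_n} | #|S| == 3)
          (if S \in G.2 then p3 else (1 - p3)%R))
  else 0%R.

Definition hg_prob (n : nat) (p2 p3 : R) (E : hgraph n -> bool) : R :=
  \big[Rplus/0%R]_(G : hgraph n | E G) hg_weight p2 p3 G.

(* One step of the propagation process; state = (Y_t, D_t).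
   [sel Y D] is the rule picking the active vertex v_t in Y. *)
Definition prop_step (n : nat) (G : hgraph n)
    (sel : {set 'I_n} -> {set 'I_n} -> 'I_n)
    (st : {set 'I_n} * {set 'I_n}) : {set 'I_n} * {set 'I_n} :=
  let: (Y, D) := st in
  if Y == set0 then (Y, D) else
  let vt := sel Y D in
  let U := [set u | (u \notin Y) && (u \notin D) &&
                    (([set vt; u] \in G.1) ||
                     [exists w in D, [set vt; u; w] \in G.2])] in
  ((Y :|: U) :\ vt, vt |: D).

Definition prop_state (n : nat) (G : hgraph n)
    (sel : {set 'I_n} -> {set 'I_n} -> 'I_n) (v : 'I_n) (T : nat) :=
  iter T (prop_step G sel) ([set v], set0).

Definition valid_sel (n : nat) (sel : {set 'I_n} -> {set 'I_n} -> 'I_n) : Prop :=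
  forall Y D : {set 'I_n}, Y != set0 -> sel Y D \in Y.

From HB Require Import structures.
From mathcomp Require Import all_boot.
From Stdlib Require Import Reals Lra Lia.
From mathcomp Require Import zify.

Set Implicit Arguments. Unset Strict Implicit. Unset Printing Implicit Defensive.

(* Each explored vertex x other than v was discovered through a present edge
   consisting of x and vertices made inactive before x; in particular distinct
   vertices have distinct discovery edges, all anchored in D_T, and |D_T| <= T.
   Hence if |Y_T| + |D_T| > m there are a set A of m vertices, a set D of at
   most T vertices inside A + v, and an injective choice of a present edge
   e(u) inside D + u through each u in A.  Distinct edges being independent,
   a union bound over (A, D, e) bounds the probability by
   C(n,m) 2^(m+1) (T p2 + T^2 p3)^m <= 2 (2e a ln n / m)^m, where
   a = K0 (1 - eps) + K0^2 r; this is below n^-c once m >= b ln n for a large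
   enough constant b. *)

HB.instance Definition _ := Monoid.isMulLaw.Build R 0%R Rmult Rmult_0_l Rmult_0_r.
HB.instance Definition _ := Monoid.isAddLaw.Build R Rmult Rplus
  Rmult_plus_distr_r Rmult_plus_distr_l.

(* [mult_INR] and [pow_INR] are about [Nat.mul] and [Nat.pow], which do not
   match [muln] and [expn] syntactically; moreover importing Reals rebinds [^]
   in nat_scope to [Nat.pow]. *)
Lemma INR_muln (a b : nat) : INR (a * b) = (INR a * INR b)%R.
Proof. exact: mult_INR. Qed.

Lemma INR_expn (a k : nat) : INR (expn a k) = (INR a ^ k)%R.
Proof. by elim: k => // k IH; rewrite expnS INR_muln IH. Qed.

Section RealBigops.
Variable I : finType.

Lemma Rsum_le (P : pred I) (F G : I -> R) :
  (forall i, P i -> F i <= G i)%R ->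
  (\big[Rplus/0%R]_(i | P i) F i <= \big[Rplus/0%R]_(i | P i) G i)%R.
Proof.
move=> FG; elim/big_rec2: _ => [|i x y Pi xy]; first lra.
by have := FG i Pi; lra.
Qed.

Lemma Rsum_ge0 (P : pred I) (F : I -> R) :
  (forall i, P i -> 0 <= F i)%R -> (0 <= \big[Rplus/0%R]_(i | P i) F i)%R.
Proof.
move=> F0; elim/big_rec: _ => [|i x Pi x0]; first lra.
by have := F0 i Pi; lra.
Qed.

Lemma Rsum_sub (P Q : pred I) (F : I -> R) :
  (forall i, P i -> Q i) -> (forall i, Q i -> 0 <= F i)%R ->
  (\big[Rplus/0%R]_(i | P i) F i <= \big[Rplus/0%R]_(i | Q i) F i)%R.
Proof.
move=> PQ F0; rewrite (big_mkcond P) (big_mkcond Q).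
apply: Rsum_le => i _; case: (boolP (P i)) => Pi; first by rewrite (PQ i Pi); lra.
by case: (boolP (Q i)) => Qi; [apply: F0 | lra].
Qed.

Lemma Rsum_const (P : pred I) (c : R) :
  \big[Rplus/0%R]_(i | P i) c = (INR #|P| * c)%R.
Proof.
rewrite big_const; elim: #|P| => [|k IH]; first by rewrite /=; lra.
by rewrite iterS IH S_INR; lra.
Qed.

Lemma Rprod_ge0 (P : pred I) (F : I -> R) :
  (forall i, P i -> 0 <= F i)%R -> (0 <= \big[Rmult/1%R]_(i | P i) F i)%R.
Proof.
move=> F0; elim/big_rec: _ => [|i x Pi x0]; first lra.
exact: Rmult_le_pos (F0 i Pi) x0.
Qed.

Lemma Rprod_le (P : pred I) (F G : I -> R) :
  (forall i, P i -> 0 <= F i <= G i)%R ->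
  (\big[Rmult/1%R]_(i | P i) F i <= \big[Rmult/1%R]_(i | P i) G i)%R.
Proof.
move=> FG.
suff: (0 <= \big[Rmult/1%R]_(i | P i) F i <= \big[Rmult/1%R]_(i | P i) G i)%R by case.
elim/big_rec2: _ => [|i x y Pi [x0 xy]]; first lra.
have [Fi0 FGi] := FG i Pi; split; first exact: Rmult_le_pos.
exact: Rmult_le_compat.
Qed.

Lemma Rprod_const (P : pred I) (c : R) :
  \big[Rmult/1%R]_(i | P i) c = (c ^ #|P|)%R.
Proof. by rewrite big_const; elim: #|P| => [|k IH] //=; rewrite IH. Qed.

End RealBigops.

Section BernoulliSubset.
Variables (X : finType) (K : pred X) (p : R).

Definition bernoulli_weight (E : {set X}) : R :=
  if [forall S, (S \in E) ==> K S] then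
    \big[Rmult/1%R]_(S | K S) (if S \in E then p else (1 - p)%R)
  else 0%R.

Lemma bernoulli_weight_ge0 (E : {set X}) :
  (0 <= p <= 1)%R -> (0 <= bernoulli_weight E)%R.
Proof.
move=> p01; rewrite /bernoulli_weight; case: ifP => _; last lra.
by apply: Rprod_ge0 => S _; case: ifP; lra.
Qed.

Lemma bernoulli_weight_superset (F : {set X}) : (forall x, x \in F -> K x) ->
  \big[Rplus/0%R]_(E : {set X} | F \subset E) bernoulli_weight E = (p ^ #|F|)%R.
Proof.
move=> FK.
pose g x (b : bool) := if K x then (if b then p else (1 - p)%R) else 1%R.
pose Q x := if x \in F then pred1 true else if K x then predT else pred1 false.
have wE (E : {set X}) : F \subset E -> bernoulli_weight E =
    if [forall S, (S \in E) ==> K S] then \big[Rmult/1%R]_S g S (S \in E) else 0%R.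
  by move=> _; rewrite /bernoulli_weight; case: ifP => // _; rewrite (big_mkcond K).
rewrite (eq_bigr _ wE) -big_mkcondr /=.
rewrite (reindex (fun f : {ffun X -> bool} => [set x | f x])); last first.
  exists (fun E : {set X} => [ffun x => x \in E]) => [f _|E _].
    by apply/ffunP => x; rewrite ffunE inE.
  by apply/setP => x; rewrite inE ffunE.
(* A subset E of K containing F is an indicator function in the family Q. *)
transitivity (\big[Rplus/0%R]_(f in finfun.family Q) \big[Rmult/1%R]_S g S (f S)).
  apply: eq_big => [f|f _]; last by apply: eq_bigr => S _; rewrite inE.
  apply/andP/familyP => [[/subsetP FE /forallP EK] x | fQ].
    rewrite /Q; case: ifP => [xF|xF]; first by have := FE x xF; rewrite inE /= => ->.
    case: ifP => // Kx; have := EK x; rewrite inE /= Kx implybF => /negbTE ->.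
    by rewrite inE.
  split.
    by apply/subsetP => x xF; have := fQ x; rewrite /Q xF inE /= => /eqP ->.
  apply/forallP => x; rewrite inE; apply/implyP => fx.
  have := fQ x; rewrite /Q; case: ifP => [xF _|xF]; first exact: FK.
  by case: ifP => // _; rewrite inE /= fx.
rewrite -bigA_distr_big_dep (eq_bigr (fun x => if x \in F then p else 1%R)).
  by rewrite -big_mkcond Rprod_const.
move=> x _; rewrite /Q /g; case: ifP => xF; first by rewrite (big_pred1 true) // FK.
case: ifP => Kx; last by rewrite (big_pred1 false).
by rewrite big_bool /=; lra.
Qed.

End BernoulliSubset.

Section HypergraphProbability.
Variables (n : nat) (p2 p3 : R).
Hypothesis p2_01 : (0 <= p2 <= 1)%R.
Hypothesis p3_01 : (0 <= p3 <= 1)%R.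

Let K2 (S : {set 'I_n}) := #|S| == 2.
Let K3 (S : {set 'I_n}) := #|S| == 3.

Lemma hg_weightE (G : hgraph n) :
  hg_weight p2 p3 G = (bernoulli_weight K2 p2 G.1 * bernoulli_weight K3 p3 G.2)%R.
Proof.
rewrite /hg_weight /bernoulli_weight.
by do 2 case: [forall S, _ ==> _]; rewrite /= ?Rmult_0_l ?Rmult_0_r.
Qed.

Lemma hg_weight_ge0 (G : hgraph n) : (0 <= hg_weight p2 p3 G)%R.
Proof. by rewrite hg_weightE; apply: Rmult_le_pos; apply: bernoulli_weight_ge0. Qed.

Lemma hg_prob_indep (E2 E3 : pred {set {set 'I_n}}) :
  hg_prob p2 p3 (fun G => E2 G.1 && E3 G.2) =
  (\big[Rplus/0%R]_(A | E2 A) bernoulli_weight K2 p2 A *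
   \big[Rplus/0%R]_(B | E3 B) bernoulli_weight K3 p3 B)%R.
Proof.
rewrite /hg_prob (eq_bigr _ (fun G _ => hg_weightE G)).
rewrite -(pair_big_dep E2 (fun _ => E3)
  (fun A B => bernoulli_weight K2 p2 A * bernoulli_weight K3 p3 B)%R).
by rewrite big_distrl; apply: eq_bigr => A _; rewrite big_distrr.
Qed.

Lemma eq_hg_prob (E F : hgraph n -> bool) : E =1 F ->
  hg_prob p2 p3 E = hg_prob p2 p3 F.
Proof. by move=> EF; apply: eq_bigl. Qed.

Lemma le_hg_prob (E F : hgraph n -> bool) : (forall G, E G -> F G) ->
  (hg_prob p2 p3 E <= hg_prob p2 p3 F)%R.
Proof. by move=> EF; apply: Rsum_sub => // G _; apply: hg_weight_ge0. Qed.

Lemma hg_prob_union_bound (I : finType) (P : pred I) (E : I -> hgraph n -> bool) :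
  (hg_prob p2 p3 (fun G => [exists i, P i && E i G]) <=
   \big[Rplus/0%R]_(i | P i) hg_prob p2 p3 (E i))%R.
Proof.
rewrite /hg_prob; set w := hg_weight p2 p3.
apply: Rle_trans (_ : _ <= \big[Rplus/0%R]_G \big[Rplus/0%R]_(i | P i && E i G) w G)%R _.
  apply: Rle_trans (Rsum_sub (Q := predT) _ _) => // [|G _]; last first.
    by apply: Rsum_ge0 => i _; apply: hg_weight_ge0.
  apply: Rsum_le => G /existsP [i PEi]; rewrite (bigD1 i) //=.
  have := Rsum_ge0 (P := fun j => P j && E j G && (j != i)) (fun _ _ => hg_weight_ge0 G).
  by rewrite /w; lra.
rewrite (exchange_big_dep P) /=; last by move=> ? ? _ /andP[].
by apply: Req_le; apply: eq_bigr => i Pi; apply: eq_bigl => G; rewrite Pi.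
Qed.

Definition present (G : hgraph n) (X : {set 'I_n}) :=
  ((#|X| == 2) && (X \in G.1)) || ((#|X| == 3) && (X \in G.2)).

Definition edge_prob (X : {set 'I_n}) := if #|X| == 2 then p2 else p3.

Lemma edge_prob_ge0 (X : {set 'I_n}) : (0 <= edge_prob X)%R.
Proof. by rewrite /edge_prob; case: ifP; lra. Qed.

Lemma hg_prob_all_present (F : {set {set 'I_n}}) :
  (forall X, X \in F -> (#|X| == 2) || (#|X| == 3)) ->
  hg_prob p2 p3 (fun G => [forall X in F, present G X]) =
  \big[Rmult/1%R]_(X in F) edge_prob X.
Proof.
move=> F23.
pose F2 := [set X in F | K2 X]; pose F3 := [set X in F | K3 X].
rewrite (eq_hg_prob (F := fun G => (F2 \subset G.1) && (F3 \subset G.2))); last first.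
  move=> G; apply/forallP/andP => [FG|[/subsetP F2G /subsetP F3G] X].
    split; apply/subsetP => X; rewrite inE => /andP [XF cX];
      have := FG X; rewrite XF /present /= (eqP cX) //=.
    by rewrite orbF.
  apply/implyP => XF; rewrite /present.
  case/orP: (F23 X XF) => cX; rewrite cX /=; first by rewrite F2G // inE XF.
  by rewrite F3G ?orbT // inE XF.
rewrite (hg_prob_indep (fun A => F2 \subset A) (fun B => F3 \subset B)).
rewrite !bernoulli_weight_superset; try by move=> X; rewrite inE => /andP[].
rewrite [RHS](bigID K2) /= (eq_bigr (fun _ => p2)); last first.
  by move=> X /andP [_ /eqP c2]; rewrite /edge_prob c2.
rewrite [X in (_ = _ * X)%R](eq_bigr (fun _ => p3)); last first.
  by move=> X /andP [_ c2]; rewrite /edge_prob ifN.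
rewrite !Rprod_const; congr (_ ^ _ * _ ^ _)%R; apply: eq_card => X; rewrite !inE //.
apply/andP/andP => [[XF c3]|[XF c2]]; split => //; first by rewrite /K2 (eqP c3).
by case/orP: (F23 X XF) => // c2'; rewrite /K2 c2' in c2.
Qed.

End HypergraphProbability.

Lemma card3 (T : finType) (a b c : T) : a != b -> a != c -> b != c ->
  #|[set a; b; c]| = 3.
Proof.
move=> ab ac bc; rewrite setUC -/(c |: [set a; b]) cardsU1 cards2 ab.
by rewrite !inE (eq_sym c a) (eq_sym c b) (negbTE ac) (negbTE bc).
Qed.

Section Exploration.
Variables (n : nat) (G : hgraph n).

Definition discovery_edge (vt x : 'I_n) (D : {set 'I_n}) : {set 'I_n} :=
  if [set vt; x] \in G.1 then [set vt; x]
  else [set vt; x; odflt x [pick w in D | [set vt; x; w] \in G.2]].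

Lemma discovery_edgeP (vt x : 'I_n) (D : {set 'I_n}) :
  vt != x -> vt \notin D -> x \notin D ->
  ([set vt; x] \in G.1) || [exists w in D, [set vt; x; w] \in G.2] ->
  [/\ present G (discovery_edge vt x D), x \in discovery_edge vt x D &
      discovery_edge vt x D :\ x \subset vt |: D].
Proof.
move=> vtx vtD xD; rewrite /discovery_edge; case: ifP => [E2 _|_ /= E3].
  split; first by rewrite /present cards2 vtx E2.
    by rewrite !inE eqxx orbT.
  by apply/subsetP => y; rewrite !inE => /andP [/negbTE -> /orP [->|]].
case: pickP => [w /andP [wD Hw]|noW]; last first.
  by case/existsP: E3 => w /andP [wD Hw]; have := noW w; rewrite wD Hw.
have vtw : vt != w by apply: contraNneq vtD => ->.
have xw : x != w by apply: contraNneq xD => ->.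
split; first by rewrite /present card3 // Hw orbT.
  by rewrite !inE eqxx !orbT.
apply/subsetP => y; rewrite !inE => /andP [/negbTE -> /orP [/orP [->|]|/eqP ->]] //.
by rewrite wD orbT.
Qed.

Variables (sel : {set 'I_n} -> {set 'I_n} -> 'I_n) (v : 'I_n).
Hypothesis sel_valid : valid_sel sel.

(* Invariant of the exploration after t steps: each explored vertex x other
   than v has a present edge [edge x] through x whose other vertices are
   inactive and were explored strictly before x, as recorded by [rank]. *)
Definition explained (t : nat) (st : {set 'I_n} * {set 'I_n}) : Prop :=
  let: (Y, D) := st in
  [/\ Y :&: D = set0, v \in Y :|: D, #|D| <= t &
   exists (rank : 'I_n -> nat) (edge : 'I_n -> {set 'I_n}),
     forall x, x \in Y :|: D -> rank x <= t /\
       (x != v -> [/\ present G (edge x), x \in edge x, edge x :\ x \subset D &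
                      {in edge x :\ x, forall y, rank y < rank x}])].

Lemma explained_init : explained 0 ([set v], set0).
Proof.
split; first by rewrite setI0.
- by rewrite !inE eqxx.
- by rewrite cards0.
by exists (fun _ => 0), (fun _ => set0) => x; rewrite !inE orbF => /eqP ->; rewrite eqxx.
Qed.

Lemma explained_step t st : explained t st -> explained t.+1 (prop_step G sel st).
Proof.
case: st => Y D [YD vS cD [rank [edge He]]]; rewrite /prop_step.
have [Y0|/eqP Y0] := eqP.
  split=> //; first exact: leqW.
  by exists rank, edge => x /He [r1 r2]; split; first exact: leqW.
set vt := sel Y D; have vtY : vt \in Y := sel_valid D Y0.
have vtD : vt \notin D by apply/negP => vtD; have := in_set0 vt; rewrite -YD inE vtY vtD.
set U := [set u | _].
have UP x : x \in U -> [/\ x \notin Y, x \notin D &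
    ([set vt; x] \in G.1) || [exists w in D, [set vt; x; w] \in G.2]].
  by rewrite inE => /andP [/andP [-> ->] ->].
clearbody U.
have S'E : ((Y :|: U) :\ vt) :|: (vt |: D) = (Y :|: D) :|: U.
  apply/setP => x; rewrite !inE; have [->|] := eqVneq x vt; first by rewrite vtY.
  by move=> _ /=; rewrite orbAC.
split.
- apply/setP => x; rewrite !inE; apply/negbTE/negP.
  move=> /andP [/andP [xvt /orP [xY|/UP [_ xD _]]] /orP [/eqP xe|xD']];
    rewrite ?xe ?eqxx // in xvt.
    by have := in_set0 x; rewrite -YD inE xY xD'.
  by rewrite xD' in xD.
- by rewrite S'E inE vS.
- by rewrite cardsU1 addnC -addn1 leq_add // leq_b1.
exists (fun x => if x \in Y :|: D then rank x else t.+1).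
exists (fun x => if x \in Y :|: D then edge x else discovery_edge vt x D).
move=> x; rewrite S'E inE => /orP [xS|xU].
  have [r1 r2] := He x xS; rewrite xS; split; first exact: leqW.
  move=> /r2 [p1 p2 p3 p4]; split=> //; first exact: subset_trans p3 (subsetU1 _ _).
  by move=> y yx; rewrite inE (subsetP p3 y yx) orbT; apply: p4.
have [xY xD Ex] := UP x xU.
have xS : x \notin Y :|: D by rewrite inE negb_or xY xD.
have vtx : vt != x by apply: contraNneq xY => <-.
rewrite (negbTE xS); split=> // _.
have [p1 p2 p3] := discovery_edgeP vtx vtD xD Ex; split=> // y /(subsetP p3) yS.
have yS' : y \in Y :|: D by move: yS; rewrite !inE => /orP [/eqP ->|->]; rewrite ?vtY ?orbT.
by rewrite yS' ltnS; exact: (He y yS').1.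
Qed.

Lemma explained_prop_state T : explained T (prop_state G sel v T).
Proof.
elim: T => [|T IH]; first exact: explained_init.
by rewrite /prop_state iterS; apply: explained_step.
Qed.

End Exploration.

Lemma exists_card_between (T : finType) (B C : {set T}) m :
  B \subset C -> #|B| <= m <= #|C| ->
  exists A : {set T}, [/\ B \subset A, A \subset C & #|A| = m].
Proof.
move=> BC /andP [Bm mC]; have [k Em] : exists k, m = #|B| + k by exists (m - #|B|); lia.
subst m; clear Bm; elim: k mC => [|k IH] mC; first by exists B; rewrite addn0.
have [A [BA AC cA]] : exists A : {set T}, [/\ B \subset A, A \subset C & #|A| = #|B| + k].
  by apply: IH; lia.
have [x xCA] : exists x, x \in C :\: A.
  apply/set0Pn; rewrite -card_gt0 cardsD (setIidPr AC); lia.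
move: xCA; rewrite inE => /andP [xA xC].
exists (x |: A); split; first exact: subset_trans BA (subsetU1 _ _).
  by rewrite subUset sub1set xC AC.
by rewrite cardsU1 xA cA addnS.
Qed.

Section Certificates.
Variable n : nat.

Definition anchored (D : {set 'I_n}) (u : 'I_n) : pred {set 'I_n} :=
  fun X => (u \in X) && (X \subset u |: D) && ((#|X| == 2) || (#|X| == 3)).

Definition certificate (A D : {set 'I_n}) (e : {ffun 'I_n -> {set 'I_n}}) :=
  (e \in pfamily set0 [pred u | u \in A] (anchored D)) && dinjectiveb e [pred u | u \in A].

Lemma explained_certificate (G : hgraph n) (v : 'I_n) T (Y D : {set 'I_n}) m :
  explained G v T (Y, D) -> T <= m -> m < #|Y| + #|D| ->
  exists (A : {set 'I_n}) (e : {ffun 'I_n -> {set 'I_n}}),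
  [/\ #|A| = m, D \subset v |: A, certificate A D e & [forall u in A, present G (e u)]].
Proof.
move=> [YD vS cD [rank [edge He]]] Tm mS.
set S := Y :|: D.
have cS : #|S| = #|Y| + #|D| by rewrite cardsU YD cards0 subn0.
have [A [DA AS cA]] : exists A : {set 'I_n}, [/\ D :\ v \subset A, A \subset S :\ v & #|A| = m].
  apply: exists_card_between; first by apply: setSD; rewrite subsetUr.
  have := cardsD1 v S; rewrite vS add1n cS => cSv.
  by rewrite (leq_trans (subset_leq_card (subD1set D v)) (leq_trans cD Tm)) -ltnS -cSv.
have edgeA u : u \in A -> [/\ present G (edge u), u \in edge u, edge u :\ u \subset D &
                             {in edge u :\ u, forall y, rank y < rank u}].
  by move/(subsetP AS); rewrite in_setD1 => /andP [uv uS]; exact: (He u uS).2 uv.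
exists A, [ffun u => if u \in A then edge u else set0]; split=> //.
- apply/subsetP => x xD; rewrite !inE; have [//|xv /=] := eqVneq x v.
  by apply: (subsetP DA); rewrite !inE xv xD.
- apply/andP; split.
    apply/pfamilyP; split.
      by apply/subsetP => x; rewrite !inE ffunE; case: (x \in A); rewrite ?eqxx.
    move=> u uA; rewrite ffunE uA; have [pu uu Du _] := edgeA u uA.
    rewrite unfold_in /anchored uu /=; apply/andP; split.
      apply/subsetP => y yu; rewrite !inE; have [//|yu' /=] := eqVneq y u.
      by apply: (subsetP Du); rewrite !inE yu' yu.
    by case/orP: pu => /andP [-> _]; rewrite ?orbT.
  apply/dinjectiveP => u u' uA u'A; rewrite !ffunE uA u'A => Eu.
  apply/eqP/negPn/negP => neq_uu'.
  have [_ u_in _ ru] := edgeA u uA; have [_ u'_in _ ru'] := edgeA u' u'A.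
  have lt1 : rank u' < rank u by apply: ru; rewrite !inE eq_sym neq_uu' Eu u'_in.
  have lt2 : rank u < rank u' by apply: ru'; rewrite !inE neq_uu' -Eu u_in.
  by have := ltn_trans lt1 lt2; rewrite ltnn.
- by apply/forallP => u; apply/implyP => uA; rewrite ffunE uA; case: (edgeA u uA).
Qed.

Lemma card_anchored2 (D : {set 'I_n}) u :
  #|[pred X | anchored D u X && (#|X| == 2)]| <= #|D|.
Proof.
apply: leq_trans (leq_imset_card (fun x => [set u; x]) D).
apply/subset_leq_card/subsetP => X; rewrite inE /anchored /=.
case/andP => /andP [/andP [uX XD] _] c2.
have /cards1P [x Ex] : #|X :\ u| == 1 by move: c2; rewrite (cardsD1 u X) uX.
have : x \in X :\ u by rewrite Ex set11.
rewrite !inE => /andP [xu xX]; apply/imsetP; exists x; last by rewrite -(setD1K uX) Ex.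
by have := subsetP XD x xX; rewrite !inE (negbTE xu).
Qed.

Lemma card_anchored3 (D : {set 'I_n}) u :
  #|[pred X | anchored D u X && (#|X| != 2)]| <= #|D| * #|D|.
Proof.
rewrite -cardsX; apply: leq_trans (leq_imset_card (fun p => [set u; p.1; p.2]) _).
apply/subset_leq_card/subsetP => X; rewrite inE /anchored /=.
case/andP => /andP [/andP [uX XD] /orP [c|c3]] c2; first by rewrite c in c2.
have /cards2P [a [b [ab Ex]]] : #|X :\ u| == 2 by move: c3; rewrite (cardsD1 u X) uX.
have inD y : y \in X :\ u -> y \in D.
  by rewrite !inE => /andP [yu yX]; have := subsetP XD y yX; rewrite !inE (negbTE yu).
apply/imsetP; exists (a, b); first by rewrite inE /= !inD // Ex !inE eqxx ?orbT.
by rewrite /= -(setD1K uX) Ex setUA.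
Qed.

Variables p2 p3 : R.
Hypothesis p2_01 : (0 <= p2 <= 1)%R.
Hypothesis p3_01 : (0 <= p3 <= 1)%R.

Lemma sum_anchored_edge_prob (D : {set 'I_n}) u :
  (\big[Rplus/0%R]_(X | anchored D u X) edge_prob p2 p3 X <=
   INR #|D| * p2 + INR #|D| * INR #|D| * p3)%R.
Proof.
rewrite (bigID (fun X : {set 'I_n} => #|X| == 2)) /=.
rewrite [X in (X + _ <= _)%R](eq_bigr (fun _ => p2)); last first.
  by move=> X /andP [_ c2]; rewrite /edge_prob c2.
rewrite [X in (_ + X <= _)%R](eq_bigr (fun _ => p3)); last first.
  by move=> X /andP [_ c2]; rewrite /edge_prob (negbTE c2).
rewrite !Rsum_const -INR_muln.
apply: Rplus_le_compat; apply: Rmult_le_compat_r; try lra; apply: le_INR; apply/leP.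
  exact: card_anchored2.
exact: card_anchored3.
Qed.

Lemma hg_prob_certificate (A D : {set 'I_n}) (e : {ffun 'I_n -> {set 'I_n}}) :
  certificate A D e ->
  hg_prob p2 p3 (fun G => [forall u in A, present G (e u)]) =
  \big[Rmult/1%R]_(u in A) edge_prob p2 p3 (e u).
Proof.
move=> /andP [/pfamilyP [_ eA] /dinjectiveP e_inj].
rewrite -(big_imset _ e_inj) -hg_prob_all_present; last first.
  by move=> X /imsetP [u uA ->]; have := eA u uA; rewrite unfold_in => /andP[].
apply: eq_hg_prob => G; apply/forallP/forallP => allA X.
  by apply/implyP => /imsetP [u uA ->]; have := allA u; rewrite uA.
by apply/implyP => uA; have := allA (e X); rewrite imset_f.
Qed.

(* Bound on the expected number of present edges through a vertex u that are
   anchored in a set of at most T vertices. *)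
Definition anchored_rate (T : nat) := (INR T * p2 + INR T * INR T * p3)%R.

Lemma anchored_rate_ge0 T : (0 <= anchored_rate T)%R.
Proof. by rewrite /anchored_rate; have := pos_INR T; nra. Qed.

Lemma sum_certificates (T : nat) (A D : {set 'I_n}) : #|D| <= T ->
  (\big[Rplus/0%R]_(e | certificate A D e)
    hg_prob p2 p3 (fun G => [forall u in A, present G (e u)])
   <= anchored_rate T ^ #|A|)%R.
Proof.
move=> cD; rewrite (eq_bigr (fun e : {ffun 'I_n -> {set 'I_n}} =>
  \big[Rmult/1%R]_(u | u \in A) edge_prob p2 p3 (e u))); last by move=> e /hg_prob_certificate.
(* Forgetting injectivity, the sum over choice functions factorizes. *)
apply: Rle_trans (Rsum_sub
  (Q := fun e => e \in pfamily set0 [pred u | u \in A] (anchored D)) _ _) _.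
- by move=> e /andP[].
- by move=> e _; apply: Rprod_ge0 => u _; apply: edge_prob_ge0.
rewrite -(big_distr_big_dep set0 [pred u | u \in A] (anchored D) (fun _ X => edge_prob p2 p3 X)).
apply: Rle_trans (_ : _ <= \big[Rmult/1%R]_(u in A) anchored_rate T)%R _; last first.
  by rewrite Rprod_const; apply: Req_le; congr (_ ^ _)%R; apply: eq_card.
apply: Rprod_le => u _; split; first by apply: Rsum_ge0 => X _; apply: edge_prob_ge0.
apply: Rle_trans (sum_anchored_edge_prob D u) _.
have DT := le_INR _ _ (leP cD); have := pos_INR #|D|; rewrite /anchored_rate => D0.
apply: Rplus_le_compat; apply: Rmult_le_compat_r; try lra.
exact: Rmult_le_compat.
Qed.

Lemma sum_anchor_sets (v : 'I_n) (T : nat) (A : {set 'I_n}) :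
  (\big[Rplus/0%R]_(D : {set 'I_n} | (D \subset v |: A) && (#|D| <= T)%nat)
     anchored_rate T ^ #|A| <= 2 ^ #|A|.+1 * anchored_rate T ^ #|A|)%R.
Proof.
have q0 := anchored_rate_ge0 T.
apply: Rle_trans (Rsum_sub (Q := fun D => D \in powerset (v |: A)) _ _) _.
- by move=> D /andP [vA _]; rewrite powersetE.
- by move=> D _; apply: pow_le.
rewrite Rsum_const; apply: Rmult_le_compat_r; first exact: pow_le.
rewrite (eq_card (B := powerset (v |: A))) // card_powerset INR_expn.
apply: Rle_pow; first by simpl; lra.
by rewrite cardsU1; apply/leP; case: (v \in A).
Qed.

Lemma prop_state_size_tail (sel : {set 'I_n} -> {set 'I_n} -> 'I_n) (v : 'I_n) (T m : nat) :
  valid_sel sel -> T <= m ->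
  (hg_prob p2 p3 (fun G => (m < #|(prop_state G sel v T).1| + #|(prop_state G sel v T).2|)%nat)
   <= INR 'C(n, m) * (2 ^ m.+1 * anchored_rate T ^ m))%R.
Proof.
move=> sel_valid Tm.
apply: Rle_trans (le_hg_prob p2_01 p3_01 (F := fun G => [exists A : {set 'I_n}, (#|A| == m) &&
   [exists D : {set 'I_n}, ((D \subset v |: A) && (#|D| <= T)%nat) &&
   [exists e, certificate A D e && [forall u in A, present G (e u)]]]]) _) _.
  move=> G; have := explained_prop_state G v sel_valid T.
  case: (prop_state G sel v T) => Y D /= expl mS.
  have [A [e [cA DA certAe allA]]] := explained_certificate expl Tm mS.
  have [_ _ cD _] := expl.
  apply/existsP; exists A; rewrite cA eqxx; apply/existsP; exists D; rewrite DA cD.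
  by apply/existsP; exists e; rewrite certAe allA.
apply: Rle_trans (hg_prob_union_bound p2_01 p3_01 _ _) _.
apply: Rle_trans (_ : _ <= \big[Rplus/0%R]_(A : {set 'I_n} | #|A| == m)
    (2 ^ m.+1 * anchored_rate T ^ m))%R _; last first.
  rewrite Rsum_const; apply: Req_le; congr (INR _ * _)%R.
  by rewrite -[n in 'C(n, m)]card_ord -card_draws; apply: eq_card => A; rewrite inE.
apply: Rsum_le => A /eqP <-.
apply: Rle_trans (hg_prob_union_bound p2_01 p3_01 _ _) _.
apply: Rle_trans (sum_anchor_sets v T A); apply: Rsum_le => D /andP [_ cD].
apply: Rle_trans (hg_prob_union_bound p2_01 p3_01 _ _) _.
exact: sum_certificates.
Qed.

End Certificates.

Lemma binomial_fact_le (n m : nat) : (INR 'C(n, m) * INR m`! <= INR n ^ m)%R.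
Proof.
rewrite -INR_muln bin_ffact -INR_expn; apply/le_INR/leP.
rewrite ffact_prod -[X in expn n X]card_ord -prod_nat_const.
by apply: leq_prod => i _; apply: leq_subr.
Qed.

Lemma pow_exp (x : R) (m : nat) : (exp x ^ m)%R = exp (INR m * x).
Proof.
elim: m => [|m IH]; first by rewrite /= Rmult_0_l exp_0.
by rewrite S_INR /= IH -exp_plus; congr exp; ring.
Qed.

Lemma pow_succ_le_exp (m : nat) : (INR m.+1 ^ m <= exp 1 * INR m ^ m)%R.
Proof.
case: m => [|m]; first by have := exp_ineq1_le 1; rewrite /=; lra.
set M := INR m.+1; have M0 : (0 < M)%R by apply: lt_0_INR; apply/ltP.
(* (M + 1)^M = M^M (1 + 1/M)^M <= M^M e *)
have h : (INR m.+2 <= M * exp (/ M))%R.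
  have := exp_ineq1_le (/ M); rewrite (S_INR m.+1) -/M => h.
  apply: Rle_trans (_ : _ <= M * (1 + / M))%R _; first by apply: Req_le; field; lra.
  by apply: Rmult_le_compat_l; lra.
apply: Rle_trans (pow_incr _ _ m.+1 _) _; first by split; [apply: pos_INR | exact: h].
rewrite Rpow_mult_distr pow_exp Rmult_comm; apply: Req_le; congr (_ * _)%R.
by congr exp; rewrite -/M; field; lra.
Qed.

Lemma pow_le_exp_fact (m : nat) : (INR m ^ m <= exp (INR m) * INR m`!)%R.
Proof.
elim: m => [|m IH]; first by rewrite /= exp_0; lra.
rewrite factS INR_muln (_ : INR m.+1 ^ m.+1 = INR m.+1 * INR m.+1 ^ m)%R //.
rewrite (_ : exp (INR m.+1) = exp 1 * exp (INR m))%R; last first.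
  by rewrite -exp_plus S_INR Rplus_comm.
have m0 := pos_INR m.+1; have e0 := Rlt_le _ _ (exp_pos 1).
apply: Rle_trans (Rmult_le_compat_l _ _ _ m0 (pow_succ_le_exp m)) _.
apply: Rle_trans (Rmult_le_compat_l _ _ _ m0 (Rmult_le_compat_l _ _ _ e0 IH)) _.
by apply: Req_le; ring.
Qed.

Lemma binomial_pow_le (n m : nat) (y : R) : (0 < INR n)%R -> (0 <= y)%R ->
  (INR 'C(n, m) * (y / INR n) ^ m <= y ^ m / INR m`!)%R.
Proof.
move=> n0 y0; have F0 : (0 < INR m`!)%R by apply: lt_0_INR; apply/ltP; exact: fact_gt0.
have nm0 : (0 < INR n ^ m)%R by apply: pow_lt.
have Cle : (INR 'C(n, m) <= INR n ^ m / INR m`!)%R.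
  apply: (Rmult_le_reg_r (INR m`!)) => //; have := binomial_fact_le n m.
  by rewrite /Rdiv Rmult_assoc Rinv_l; lra.
rewrite /Rdiv Rpow_mult_distr pow_inv.
apply: Rle_trans (Rmult_le_compat_r _ _ _ _ Cle) _.
  by apply: Rmult_le_pos; [apply: pow_le | apply: Rlt_le; apply: Rinv_0_lt_compat].
by apply: Req_le; field; lra.
Qed.

Lemma pow_div_fact_le (y : R) (m : nat) : (0 <= y)%R -> (0 < m)%nat ->
  (y ^ m / INR m`! <= (exp 1 * y / INR m) ^ m)%R.
Proof.
move=> y0 m0; have M0 : (0 < INR m)%R by apply: lt_0_INR; apply/ltP.
have F0 : (0 < INR m`!)%R by apply: lt_0_INR; apply/ltP; exact: fact_gt0.
have Mm0 : (0 < INR m ^ m)%R by apply: pow_lt.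
rewrite /Rdiv !Rpow_mult_distr pow_inv pow_exp Rmult_1_r.
rewrite (Rmult_comm (exp _)) Rmult_assoc; apply: Rmult_le_compat_l; first exact: pow_le.
apply: (Rmult_le_reg_r (INR m`! * INR m ^ m)); first exact: Rmult_lt_0_compat.
have -> : (/ INR m`! * (INR m`! * INR m ^ m) = INR m ^ m)%R by field; lra.
have -> : (exp (INR m) * / INR m ^ m * (INR m`! * INR m ^ m) = exp (INR m) * INR m`!)%R.
  by field; lra.
exact: pow_le_exp_fact.
Qed.

Lemma two_exp_neg_lt (c L M : R) : (1 <= L)%R -> ((c + 1) * L < M)%R ->
  (2 * exp (- M) < exp (- (c * L)))%R.
Proof.
move=> L1 LM.
have lt1 : (exp (- M) < exp (- (c * L)) * exp (- L))%R.
  by rewrite -exp_plus; apply: exp_increasing; lra.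
have le2 : (2 * exp (- L) <= 1)%R.
  have e2 : (2 < exp 1)%R by have := exp_ineq1 1 R1_neq_R0; lra.
  have eL : (exp 1 <= exp L)%R.
    by case: (Req_dec L 1) => [->|L'1]; [lra | apply/Rlt_le/exp_increasing; lra].
  have eL0 := exp_pos L.
  rewrite exp_Ropp; apply: (Rmult_le_reg_r (exp L)) => //.
  by rewrite Rmult_assoc Rinv_l; lra.
by have := exp_pos (- (c * L)); have := exp_pos (- L); nra.
Qed.

Lemma binomial_tail_lt (n m : nat) (L a b c Q : R) :
  (0 < INR n)%R -> (1 <= L)%R -> (0 <= a)%R ->
  (2 * exp 1 * exp 1 * a <= b)%R -> (c + 1 <= b)%R -> (b * L < INR m)%R ->
  (0 <= Q <= a * L / INR n)%R ->
  (INR 'C(n, m) * (2 ^ m.+1 * Q ^ m) < exp (- (c * L)))%R.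
Proof.
move=> n0 L1 a0 ab cb bLm [Q0 QaL].
set y := (2 * a * L)%R; have y0 : (0 <= y)%R by rewrite /y; nra.
have e0 := exp_pos 1; have e1 : (1 < exp 1)%R by have := exp_ineq1 1 R1_neq_R0; lra.
have ea0 : (0 <= 2 * exp 1 * exp 1 * a)%R by apply: Rmult_le_pos; nra.
have b0 : (0 <= b)%R by lra.
have M0 : (0 < INR m)%R by have := Rmult_le_pos _ _ b0 (ltac:(lra) : (0 <= L)%R); lra.
have m0 : (0 < m)%nat by apply/ltP/INR_lt.
have step1 : (INR 'C(n, m) * (2 * Q) ^ m <= y ^ m / INR m`!)%R.
  apply: Rle_trans (binomial_pow_le m n0 y0); apply: Rmult_le_compat_l; first exact: pos_INR.
  apply: pow_incr; split; first lra.
  by rewrite /y (_ : 2 * a * L / INR n = 2 * (a * L / INR n))%R; [lra | field; lra].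
have step2 : ((exp 1 * y / INR m) ^ m <= exp (- INR m))%R.
  rewrite (_ : exp (- INR m) = exp (- 1) ^ m)%R; last by rewrite pow_exp; congr exp; ring.
  rewrite exp_Ropp.
  apply: pow_incr; split; first by apply: Rmult_le_pos; [nra | apply/Rlt_le/Rinv_0_lt_compat].
  apply: (Rmult_le_reg_r (INR m * exp 1)); first nra.
  rewrite (_ : exp 1 * y / INR m * (INR m * exp 1) = 2 * exp 1 * exp 1 * a * L)%R;
    last by rewrite /y; field; lra.
  rewrite (_ : / exp 1 * (INR m * exp 1) = INR m)%R; last by field; lra.
  by have := Rmult_le_compat_r L _ _ (ltac:(lra) : (0 <= L)%R) ab; lra.
have := Rle_trans _ _ _ step1 (Rle_trans _ _ _ (pow_div_fact_le y0 m0) step2).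
have := two_exp_neg_lt (c := c) L1 (ltac:(nra) : ((c + 1) * L < INR m)%R).
rewrite (_ : INR 'C(n, m) * (2 ^ m.+1 * Q ^ m) = 2 * (INR 'C(n, m) * (2 * Q) ^ m))%R.
  by lra.
by rewrite Rpow_mult_distr /=; ring.
Qed.

Lemma ln_ge1 (x : R) : (3 <= x)%R -> (1 <= ln x)%R.
Proof.
move=> x3; apply: Rnot_lt_le => lnx1.
by have := exp_increasing _ _ lnx1; rewrite exp_ln; have := exp_le_3; lra.
Qed.

Lemma exists_INR_between (z : R) : (0 <= z)%R -> exists m : nat, (z < INR m <= z + 1)%R.
Proof.
move=> z0; have [zu uz] := archimed z; have u0 : (0 <= up z)%Z by apply: le_IZR; lra.
by exists (Z.to_nat (up z)); rewrite INR_IZR_INZ Znat.Z2Nat.id //; lra.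
Qed.

Lemma eventually_INR_ge (z : R) : exists N : nat, forall n, (N <= n)%nat -> (z <= INR n)%R.
Proof.
have [N [zN _]] := exists_INR_between (Rmax_l 0 z).
exists N => n /leP /le_INR Nn; have := Rmax_r 0 z; lra.
Qed.

Lemma edge_probs_01 (eps r x : R) : (0 < eps < 1)%R -> (0 < r)%R -> (3 <= x)%R -> (r <= x)%R ->
  (0 <= (1 - eps) / x <= 1)%R /\ (0 <= r / (x * ln x) <= 1)%R.
Proof.
move=> eps01 r0 x3 rx; have L1 := ln_ge1 x3.
have xL : (x <= x * ln x)%R by nra.
split; split; try (apply: Rmult_le_pos; [lra | apply/Rlt_le/Rinv_0_lt_compat; nra]).
  by apply: (Rmult_le_reg_r x); [lra | rewrite /Rdiv Rmult_assoc Rinv_l; lra].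
by apply: (Rmult_le_reg_r (x * ln x)); [nra | rewrite /Rdiv Rmult_assoc Rinv_l; nra].
Qed.

Lemma anchored_rate_le (eps r K0 x L : R) (T : nat) :
  (0 < x)%R -> (0 < L)%R -> (eps < 1)%R -> (0 < r)%R -> (INR T <= K0 * L)%R ->
  (anchored_rate ((1 - eps) / x) (r / (x * L)) T <=
   (K0 * (1 - eps) + K0 * K0 * r) * L / x)%R.
Proof.
move=> x0 L0 eps1 r0 TL; have T0 := pos_INR T; rewrite /anchored_rate.
rewrite (_ : INR T * ((1 - eps) / x) + INR T * INR T * (r / (x * L)) =
             (INR T * (1 - eps) + INR T * INR T * r / L) / x)%R; last by field; lra.
apply: Rmult_le_compat_r; first exact/Rlt_le/Rinv_0_lt_compat.
have TT : (INR T * INR T <= K0 * L * (K0 * L))%R by apply: Rmult_le_compat.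
have TTr : (INR T * INR T * r / L <= K0 * K0 * r * L)%R.
  apply: (Rmult_le_reg_r L) => //; rewrite /Rdiv Rmult_assoc Rinv_l; nra.
by nra.
Qed.

Theorem proposition2 (eps r : R) :
  (0 < eps < 1)%R -> (0 < r)%R ->
  let K0 := Rmax 1 (2 * (9 + eps) / r) in
  forall c : R, (0 < c)%R ->
  exists K1 : R, exists N : nat, forall n : nat, (N <= n)%N ->
  let p2 := ((1 - eps) / INR n)%R in
  let p3 := (r / (INR n * ln (INR n)))%R in
  forall (sel : {set 'I_n} -> {set 'I_n} -> 'I_n), valid_sel sel ->
  forall (v : 'I_n) (T : nat), (INR T <= K0 * ln (INR n))%R ->
  (hg_prob p2 p3
     (fun G => let st := prop_state G sel v T in
               Rlt_dec (K1 * ln (INR n)) (INR (#|st.1| + #|st.2|)))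
   < Rpower (INR n) (- c))%R.
Proof.
move=> eps01 r0 K0 c _; have K01 : (1 <= K0)%R by apply: Rmax_l.
set a := (K0 * (1 - eps) + K0 * K0 * r)%R; have a0 : (0 <= a)%R by rewrite /a; nra.
set b := Rmax (Rmax (2 * exp 1 * exp 1 * a) (c + 1)) K0.
have [N HN] := eventually_INR_ge (Rmax 3 r).
exists (b + 2)%R, N => n /HN n_ge p2 p3 sel sel_valid v T TKL.
have n3 : (3 <= INR n)%R := Rle_trans _ _ _ (Rmax_l _ _) n_ge.
have [p2_01 p3_01] := edge_probs_01 eps01 r0 n3 (Rle_trans _ _ _ (Rmax_r _ _) n_ge).
set L := ln (INR n) in TKL p3 p3_01 *; have L1 : (1 <= L)%R := ln_ge1 n3.
have bK0 : (K0 <= b)%R by apply: Rmax_r.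
have [m [bLm mbL]] := exists_INR_between (ltac:(nra) : (0 <= b * L)%R).
have Tm : (T <= m)%nat by apply/leP/INR_le; nra.
apply: Rle_lt_trans (le_hg_prob p2_01 p3_01 (F := fun G =>
  (m < #|(prop_state G sel v T).1| + #|(prop_state G sel v T).2|)%nat) _) _.
  by move=> G /=; case: Rlt_dec => //= lt _; apply/ltP/INR_lt; nra.
apply: Rle_lt_trans (prop_state_size_tail p2_01 p3_01 v sel_valid Tm) _.
rewrite /Rpower -/L (_ : - c * L = - (c * L))%R; last by ring.
apply: (binomial_tail_lt (a := a) (b := b)) => //; try lra.
- by apply: Rle_trans (Rmax_l _ _) (Rmax_l _ _).
- by apply: Rle_trans (Rmax_r _ _) (Rmax_l _ _).
- split; first exact: anchored_rate_ge0.
  by apply: anchored_rate_le => //; lra.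
Qed.
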